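(* Let $V$ be a finite-dimensional complex vector space and $M:\mathbb C\to GL(V)$ a rational function such that $[M(u),M(v)]=0$ for all $u,v\in\mathbb C$. Let $M(u)=M_S(u)M_U(u)$ be the multiplicative Jordan decomposition of $M(u)$ into commuting semisimple and unipotent parts. Then $M_S$ and $M_U$ are rational functions of $u$. *)

From HB Require Import structures.
From mathcomp Require Import all_boot all_order all_algebra.
From mathcomp Require Import reals complex.
Set Implicit Arguments. Unset Strict Implicit. Unset Printing Implicit Defensive.
Import Order.TTheory GRing.Theory Num.Theory.
Local Open Scope ring_scope.

(* The complex numbers are modelled as R[i] (= complex R) for a real
   field R : realType (every realType is a model of the reals). *)

Definition eval_pmx {C : comNzRingType} {m n : nat}
  (P : 'M[{poly C}]_(m, n)) (u : C) : 'M[C]_(m, n) :=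
  map_mx (fun p => p.[u]) P.

(* [M] is a rational matrix-valued function with common denominator [q]:
   q <> 0 and there is a polynomial matrix P with M u = P(u) / q(u)
   wherever q(u) <> 0 (the domain of definition of M). *)
Definition rational_mx_fun {C : fieldType} {n : nat}
  (q : {poly C}) (M : C -> 'M[C]_n) : Prop :=
  q != 0 /\
  exists P : 'M[{poly C}]_n,
    forall u, q.[u] != 0 -> M u = (q.[u])^-1 *: eval_pmx P u.

Definition unipotent_mx {C : fieldType} {n : nat} (U : 'M[C]_n) : Prop :=
  exists k : nat, iter k (mulmx (U - 1%:M)) 1%:M = 0.

(* Multiplicative Jordan decomposition A = S U of an invertible matrix:
   S semisimple (= diagonalizable over an algebraically closed field),
   U unipotent, and S, U commute. *)
Definition mult_jordan_decomp {C : fieldType} {n : nat}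
  (A S U : 'M[C]_n) : Prop :=
  [/\ A = S *m U, S *m U = U *m S, diagonalizable S & unipotent_mx U].

From HB Require Import structures.
From mathcomp Require Import all_boot all_order all_algebra.
From mathcomp Require Import reals complex ring.
Set Implicit Arguments. Unset Strict Implicit. Unset Printing Implicit Defensive.
Import Order.TTheory GRing.Theory Num.Theory.
Local Open Scope ring_scope.

(* Write M = P / q with P(u) = \sum_k u^k P_k.  Since the values M(u) commute,
   so do the coefficients P_k.  Each P_k = D_k + N_k has an additive Jordan
   decomposition with D_k a polynomial in P_k, so all the D_k and N_k commute:
   D(u) = \sum_k u^k D_k is diagonalizable, N(u) = \sum_k u^k N_k is nilpotent
   and they commute.  By uniqueness of the multiplicative Jordan decomposition,
   M_S(u) = D(u) / q(u) and M_U(u) = D(u)^-1 P(u), both rational in u. *)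

Definition nilpotent_elt (R : pzSemiRingType) (x : R) : Prop := exists k, x ^+ k = 0.

Section Nilpotent.
Variable R : pzRingType.
Implicit Types x y : R.

Lemma nilpotent_eltD x y : GRing.comm x y ->
  nilpotent_elt x -> nilpotent_elt y -> nilpotent_elt (x + y).
Proof.
move=> cxy [a xa] [b yb]; exists (a + b)%N.
rewrite exprDn_comm //; apply: big1 => -[i /= lt_i_ab] _.
have [le_b_i|lt_i_b] := leqP b i.
  by rewrite -(subnKC le_b_i) exprD yb !(mul0r, mulr0, mul0rn).
have le_a : (a <= a + b - i)%N by rewrite -addnBA ?leq_addr // ltnW.
by rewrite -(subnKC le_a) exprD xa !(mul0r, mulr0, mul0rn).
Qed.

Lemma nilpotent_eltN x : nilpotent_elt x -> nilpotent_elt (- x).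
Proof. by case=> k xk; exists k; rewrite exprNn xk mulr0. Qed.

Lemma nilpotent_eltMl x y : GRing.comm x y -> nilpotent_elt y -> nilpotent_elt (x * y).
Proof. by move=> cxy [k yk]; exists k; rewrite exprMn_comm // yk mulr0. Qed.

Lemma nilpotent_elt_sum (I : Type) (r : seq I) (F : I -> R) :
  (forall i j, GRing.comm (F i) (F j)) -> (forall i, nilpotent_elt (F i)) ->
  nilpotent_elt (\sum_(i <- r) F i).
Proof.
move=> cF nF; elim: r => [|i r IHr]; first by exists 1%N; rewrite big_nil expr1.
rewrite big_cons; apply: nilpotent_eltD => //.
by apply: commr_sum => j _; apply: cF.
Qed.

End Nilpotent.

Section NilpotentUnit.
Variable R : unitRingType.
Implicit Types x y z : R.

Lemma unitr1D_nilpotent z : nilpotent_elt z -> 1 + z \is a GRing.unit.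
Proof.
case=> k zk; set s := \sum_(i < k) 1 ^+ (k.-1 - i) * (- z) ^+ i.
have geom : (1 + z) * s = 1.
  have := subrXX_comm k (commr_sym (commr1 (- z))).
  by rewrite expr1n exprNn zk mulr0 subr0 opprK => <-.
have cs : GRing.comm (1 + z) s.
  apply: commr_sum => i _; apply: commrM; apply: commrX.
    exact: commr1.
  by apply/commrN/commr_sym; apply: commrD; [apply: commr1 | apply: commr_refl].
by apply/unitrP; exists s; rewrite -cs geom.
Qed.

Lemma unitrD_nilpotent x y : x \is a GRing.unit -> GRing.comm x y ->
  nilpotent_elt y -> x + y \is a GRing.unit.
Proof.
move=> xu cxy ny; have -> : x + y = x * (1 + x^-1 * y).
  by rewrite mulrDr mulr1 mulrA mulrV ?mul1r.
rewrite unitrMr //; apply/unitr1D_nilpotent/nilpotent_eltMl => //.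
exact/commr_sym/commrV.
Qed.

End NilpotentUnit.

Section AlgebraCommute.
Variables (R : pzRingType) (V : algType R).
Implicit Types A B N : V.

Lemma commrZ A B (a : R) : GRing.comm A B -> GRing.comm A (a *: B).
Proof. by move=> cAB; rewrite /GRing.comm -scalerAr -scalerAl cAB. Qed.

Lemma commr_lincomb (I J : Type) (r : seq I) (s : seq J) (X : I -> V) (Y : J -> V)
    (a : I -> R) (b : J -> R) : (forall i j, GRing.comm (X i) (Y j)) ->
  GRing.comm (\sum_(i <- r) a i *: X i) (\sum_(j <- s) b j *: Y j).
Proof.
move=> cXY; apply: commr_sum => j _; apply: commrZ; apply: commr_sym.
by apply: commr_sum => i _; apply: commrZ; apply: commr_sym.
Qed.

Lemma nilpotent_eltZ (a : R) N : nilpotent_elt N -> nilpotent_elt (a *: N).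
Proof. by case=> k Nk; exists k; rewrite exprZn Nk scaler0. Qed.

End AlgebraCommute.

Section Diagonalizable.
Variables (F : fieldType) (n : nat).
Local Notation Mx := 'M[F]_n.+1.
Implicit Types A B D S Z : Mx.

Lemma is_diag_mxD m p (A B : 'M[F]_(m, p)) :
  is_diag_mx A -> is_diag_mx B -> is_diag_mx (A + B).
Proof.
move=> /is_diag_mxP dA /is_diag_mxP dB; apply/is_diag_mxP => i j neq_ij.
by rewrite mxE dA // dB // addr0.
Qed.

Lemma is_diag_mxZ m p (a : F) (A : 'M[F]_(m, p)) : is_diag_mx A -> is_diag_mx (a *: A).
Proof.
by move=> /is_diag_mxP dA; apply/is_diag_mxP => i j neq_ij; rewrite mxE dA // mulr0.
Qed.

Lemma conjmxD m p (V : 'M[F]_(m, p)) f g : conjmx V (f + g) = conjmx V f + conjmx V g.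
Proof. by rewrite /conjmx mulmxDr mulmxDl. Qed.

Lemma conjmxZ m p (V : 'M[F]_(m, p)) (a : F) f : conjmx V (a *: f) = a *: conjmx V f.
Proof. by rewrite /conjmx -scalemxAr -scalemxAl. Qed.

Lemma conjumxX (V f : Mx) k : V \in unitmx -> conjmx V (f ^+ k) = conjmx V f ^+ k.
Proof.
move=> Vu; elim: k => [|k IHk]; first by rewrite !expr0 conjumx // mulmx1 mulmxV.
by rewrite !exprS -IHk [LHS](conjmxM (stablemx_unit _ Vu) (stablemx_unit _ Vu)).
Qed.

Lemma diag_mxX (d : 'rV[F]_n.+1) k : diag_mx d ^+ k = diag_mx (\row_j d 0 j ^+ k).
Proof.
elim: k => [|k IHk]; first by apply/matrixP => i j; rewrite !mxE.
by rewrite exprS IHk [_ * _]mulmx_diag; congr diag_mx; apply/rowP => j; rewrite !mxE exprS.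
Qed.

Lemma diagonalizableZ (a : F) A : diagonalizable A -> diagonalizable (a *: A).
Proof. by case=> P Pu dA; exists P => //; rewrite /similar_to conjmxZ is_diag_mxZ. Qed.

Lemma diagonalizable_lincomb (I : finType) (D : I -> Mx) (c : I -> F) :
  (forall i j, GRing.comm (D i) (D j)) -> (forall i, diagonalizable (D i)) ->
  diagonalizable (\sum_i c i *: D i).
Proof.
move=> cD dD; have [|P Pu /allP PD] := (codiagonalizableP (codom D)).1.
  by split=> [_ _ /codomP[i ->] /codomP[j ->]|_ /codomP[i ->]]; [apply: cD | apply: dD].
exists P => //; apply: (big_ind (fun A => similar_diag P A)) => [|A B dA dB|i _].
- by rewrite /similar_to conjmx0 mx0_is_diag.
- by rewrite /similar_to conjmxD is_diag_mxD.
- by rewrite /similar_to conjmxZ is_diag_mxZ //; apply: PD; apply: codom_f.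
Qed.

Lemma diagonalizable_nilpotent_eq0 Z : diagonalizable Z -> nilpotent_elt Z -> Z = 0.
Proof.
case=> P Pu /diag_mxP[d dZ] [k Zk].
have : conjmx P (Z ^+ k) = 0 by rewrite Zk conjmx0.
rewrite conjumxX // dZ diag_mxX => dk0.
have d0 : d = 0.
  apply/rowP => j; have /matrixP/(_ j j) := dk0; rewrite !mxE eqxx mulr1n.
  by move/eqP; rewrite expf_eq0 => /andP[_ /eqP].
by rewrite -(conjmxK Z Pu) dZ d0 linear0 conjmx0.
Qed.

Lemma diagonalizableB S S' : GRing.comm S S' ->
  diagonalizable S -> diagonalizable S' -> diagonalizable (S - S').
Proof.
move=> cSS' dS dS'.
pose D (b : bool) := if b then S else S'.
have := @diagonalizable_lincomb _ D (fun b => if b then 1 else -1).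
rewrite big_bool /= scale1r scaleN1r; apply=> [[] []|[]] //=.
Qed.

End Diagonalizable.

Section MultJordanField.
Variables (F : fieldType) (n : nat).
Local Notation Mx := 'M[F]_n.+1.
Implicit Types A D N S U : Mx.

Lemma unipotent_mxE (U : Mx) : unipotent_mx U <-> nilpotent_elt (U - 1).
Proof.
split=> -[k Uk]; exists k; last by rewrite [LHS]iter_mulr_1.
by rewrite -Uk [RHS]iter_mulr_1.
Qed.

Lemma mult_jordan_decomp_of_add A D N : A = D + N -> GRing.comm D N ->
  diagonalizable D -> nilpotent_elt N -> A \in unitmx ->
  mult_jordan_decomp A D (invmx D *m A).
Proof.
move=> eA cDN dD nN Au.
have cAN : GRing.comm A N by rewrite eA; apply/commr_sym/commrD.
have Du : D \in unitmx.
  have -> : D = A + - N by rewrite eA addrK.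
  by apply: unitrD_nilpotent; [|apply: commrN|apply: nilpotent_eltN].
have cDA : D *m A = A *m D by rewrite eA; apply: commrD.
split => //.
- by rewrite mulKVmx.
- by rewrite mulmxA mulmxV // mul1mx -mulmxA -cDA mulKmx.
apply/unipotent_mxE; rewrite eA mulmxDr mulVmx // -[1%:M]/(1 : Mx) addrAC subrr add0r.
apply: nilpotent_eltMl => //; exact/commr_sym/commrV/commr_sym.
Qed.

Lemma mult_jordan_decomp_uniq_comm A S U S' U' : A \in unitmx ->
  mult_jordan_decomp A S U -> mult_jordan_decomp A S' U' ->
  GRing.comm S S' -> GRing.comm S U' -> GRing.comm U S' -> GRing.comm U U' ->
  S = S'.
Proof.
move=> Au [eA cSU dS /unipotent_mxE nU] [eA' cS'U' dS' /unipotent_mxE nU'].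
move=> cSS' cSU' cUS' cUU'.
have Uu : U \in unitmx by move: Au; rewrite eA unitmx_mul => /andP[].
have eZ : (S - S') * U = S' * (U' - U).
  by rewrite mulrBl mulrBr -[S * U]/(S *m U) -[S' * U']/(S' *m U') -eA -eA'.
have cZU : GRing.comm (S - S') U by apply/commr_sym/commrB => //; apply: commr_sym.
have [k Zk] : nilpotent_elt ((S - S') * U).
  rewrite eZ; apply: nilpotent_eltMl; first by apply: commrB => //; apply: commr_sym.
  have -> : U' - U = (U' - 1) + - (U - 1) by rewrite opprB addrA subrK.
  apply: nilpotent_eltD => //; last exact: nilpotent_eltN.
  apply: commrN; apply: commr_sym; apply: commrB; last exact: commr1.
  by apply: commr_sym; apply: commrB; [apply: commr_sym | apply: commr1].
apply/eqP; rewrite -subr_eq0; apply/eqP.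
apply: diagonalizable_nilpotent_eq0; first exact: diagonalizableB.
exists k; apply: (mulIr (unitrX k Uu)).
by rewrite mul0r -exprMn_comm.
Qed.

End MultJordanField.

Section XsubCPowers.
Variable F : fieldType.
Implicit Types (p : {poly F}) (L : seq F).

Lemma dvdp_big_mem L (G : F -> {poly F}) l : l \in L -> G l %| \prod_(m <- L) G m.
Proof. by move=> lL; rewrite (big_rem l lL) /= dvdp_mulIl. Qed.

Lemma coprimep_XsubCX_prod l L K : l \notin L ->
  coprimep (('X - l%:P) ^+ K) (\prod_(m <- L) ('X - m%:P) ^+ K).
Proof.
move=> lL; apply: coprimep_expl.
elim: L lL => [|m L IHL]; first by rewrite big_nil coprimep1.
rewrite inE negb_or => /andP[lm lL]; rewrite big_cons coprimepMr IHL // andbT.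
by apply: coprimep_expr; rewrite coprimep_XsubC root_XsubC eq_sym.
Qed.

Lemma dvdp_prod_XsubCX L K p : uniq L ->
  (forall l, l \in L -> ('X - l%:P) ^+ K %| p) ->
  \prod_(m <- L) ('X - m%:P) ^+ K %| p.
Proof.
elim: L => [|l L IHL]; first by rewrite big_nil dvd1p.
move=> /= /andP[lL uL] dvdL; rewrite big_cons Gauss_dvdp ?coprimep_XsubCX_prod //.
by rewrite dvdL ?mem_head // IHL // => m mL; apply: dvdL; rewrite inE mL orbT.
Qed.

Lemma chinese_XsubCX L K : uniq L ->
  exists f : {poly F}, forall l, l \in L -> ('X - l%:P) ^+ K %| f - l%:P.
Proof.
elim: L => [|l L IHL]; first by exists 0.
move=> /= /andP[lL uL]; have [g dvdg] := IHL uL.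
set a := ('X - l%:P) ^+ K; set b := \prod_(m <- L) ('X - m%:P) ^+ K.
have /Bezout_eq1_coprimepP[[u v] /= uv1] : coprimep a b by apply: coprimep_XsubCX_prod.
exists (l%:P * (v * b) + g * (u * a)) => m; rewrite inE => /orP[/eqP ->|mL].
  have -> : l%:P * (v * b) + g * (u * a) - l%:P =
      (g - l%:P) * u * a + l%:P * (u * a + v * b - 1) by ring.
  by rewrite uv1 subrr mulr0 addr0 dvdp_mull.
have -> : l%:P * (v * b) + g * (u * a) - m%:P =
    (l%:P - m%:P) * v * b + (g - m%:P) * (u * a) + m%:P * (u * a + v * b - 1) by ring.
rewrite uv1 subrr mulr0 addr0; apply: dvdp_add.
  by apply: dvdp_mull; apply: (dvdp_big_mem (fun m => ('X - m%:P) ^+ K)).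
by rewrite mulrA; do 2 apply: dvdp_mulr; apply: dvdg.
Qed.

Lemma dvdp_prod_XsubC_undup (s : seq F) :
  \prod_(z <- s) ('X - z%:P) %| \prod_(l <- undup s) ('X - l%:P) ^+ size s.
Proof.
elim: s => [|z s IHs] /=; first by rewrite !big_nil dvdpp.
case: ifP => zs.
  rewrite big_cons; under [X in _ %| X]eq_bigr do rewrite exprS.
  rewrite big_split /=; apply: dvdp_mul => //.
  by apply: (dvdp_big_mem (fun m => 'X - m%:P)); rewrite mem_undup.
rewrite !big_cons exprS -mulrA; apply: dvdp_mul; first exact: dvdpp.
apply: dvdp_mull; apply: (dvdp_trans IHs).
elim: (undup s) => [|x r IHr]; first by rewrite !big_nil dvdpp.
by rewrite !big_cons exprS; apply: dvdp_mul => //; apply: dvdp_mull.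
Qed.

End XsubCPowers.

Section MultJordanClosed.
Variables (C : closedFieldType) (n : nat).
Local Notation Mx := 'M[C]_n.+1.
Implicit Types A S U : Mx.

Lemma horner_mx_dvdp_eq0 A (p r : {poly C}) :
  horner_mx A p = 0 -> p %| r -> horner_mx A r = 0.
Proof. by move=> Ap0 /divpK <-; rewrite rmorphM /= Ap0 mulr0. Qed.

Lemma additive_jordan_horner A : exists f : {poly C},
  diagonalizable (horner_mx A f) /\ nilpotent_elt (A - horner_mx A f).
Proof.
have [s] := closed_field_poly_normal (char_poly A).
rewrite (monicP (char_poly_monic A)) scale1r => chiA.
set L := undup s; set K := size s.
have [f fL] := chinese_XsubCX K (undup_uniq s).
(* f = l modulo (X - l)^K at every eigenvalue l: hence the square-free
   \prod_l (X - l) annihilates f(A), and (X - f)^K annihilates A. *)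
set Q := \prod_(l <- L) ('X - l%:P) ^+ K.
have AQ0 : horner_mx A Q = 0.
  by apply: (horner_mx_dvdp_eq0 (Cayley_Hamilton A)); rewrite chiA dvdp_prod_XsubC_undup.
exists f; split.
  apply/diagonalizableP; exists L; first exact: undup_uniq.
  apply: mxminpoly_min.
  have -> : horner_mx (horner_mx A f) (\prod_(x <- L) ('X - x%:P)) =
            horner_mx A (\prod_(x <- L) (f - x%:P)).
    rewrite !rmorph_prod; apply: eq_bigr => x _.
    by rewrite !rmorphB /= !horner_mx_X !horner_mx_C.
  apply: (horner_mx_dvdp_eq0 AQ0); apply: dvdp_prod_XsubCX; first exact: undup_uniq.
  move=> l lL; apply: (dvdp_trans (fL l lL)).
  exact: (dvdp_big_mem (fun x => f - x%:P)).
exists K; have -> : (A - horner_mx A f) ^+ K = horner_mx A (('X - f) ^+ K).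
  by rewrite rmorphXn rmorphB /= horner_mx_X.
apply: (horner_mx_dvdp_eq0 AQ0); apply: dvdp_prod_XsubCX; first exact: undup_uniq.
move=> l lL; apply: dvdp_exp2r.
have -> : 'X - f = ('X - l%:P) - (f - l%:P) by ring.
apply: dvdp_sub; first exact: dvdpp.
apply: dvdp_trans (fL l lL); rewrite dvdp_exp ?dvdpp //.
by move: lL; rewrite /L /K; case: (s).
Qed.

Lemma mult_jordan_decomp_unit A S U : A \in unitmx -> mult_jordan_decomp A S U ->
  S \in unitmx /\ U = invmx S *m A.
Proof.
move=> Au [eA _ _ _]; have Su : S \in unitmx by move: Au; rewrite eA unitmx_mul => /andP[].
by split=> //; rewrite eA mulKmx.
Qed.

Lemma mult_jordan_decomp_horner A S U : A \in unitmx -> mult_jordan_decomp A S U ->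
  exists f, S = horner_mx A f.
Proof.
move=> Au jdA; have [f [dD nN]] := additive_jordan_horner A.
set D := horner_mx A f in dD nN.
have commD X : GRing.comm X A -> GRing.comm X D /\ GRing.comm X (invmx D *m A).
  move=> cXA; have cXD : GRing.comm X D by apply: comm_mx_horner.
  by split=> //; apply: commrM => //; apply: commrV.
have cDA : GRing.comm D (A - D) by apply: commrB; [apply: comm_horner_mx | ].
have jdD := mult_jordan_decomp_of_add (esym (subrKC D A)) cDA dD nN Au.
have [eA cSU _ _] := jdA.
have [cSD cSV] : GRing.comm S D /\ GRing.comm S (invmx D *m A).
  by apply: commD; rewrite eA; apply: commrM.
have [cUD cUV] : GRing.comm U D /\ GRing.comm U (invmx D *m A).
  by apply: commD; rewrite eA; apply: commrM => //; apply: commr_sym.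
by exists f; apply: (mult_jordan_decomp_uniq_comm Au jdA jdD).
Qed.

Lemma mult_jordan_decomp_comm A S U X : A \in unitmx -> mult_jordan_decomp A S U ->
  GRing.comm X A -> GRing.comm X S /\ GRing.comm X U.
Proof.
move=> Au jdA cXA; have [f eS] := mult_jordan_decomp_horner Au jdA.
have cXS : GRing.comm X S by rewrite eS; apply: comm_mx_horner.
have [_ ->] := mult_jordan_decomp_unit Au jdA.
by split=> //; apply: commrM => //; apply: commrV.
Qed.

Lemma mult_jordan_decomp_uniq A S U S' U' : A \in unitmx ->
  mult_jordan_decomp A S U -> mult_jordan_decomp A S' U' -> S = S' /\ U = U'.
Proof.
move=> Au jdA jdA'; have [eA' cSU' _ _] := jdA'.
have [cS'S cS'U] : GRing.comm S' S /\ GRing.comm S' U.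
  by apply: (mult_jordan_decomp_comm Au jdA); rewrite eA'; apply: commrM.
have [cU'S cU'U] : GRing.comm U' S /\ GRing.comm U' U.
  apply: (mult_jordan_decomp_comm Au jdA); rewrite eA'.
  by apply: commrM => //; apply: commr_sym.
have eS : S = S' by apply: (mult_jordan_decomp_uniq_comm Au jdA jdA'); apply: commr_sym.
split=> //; rewrite (mult_jordan_decomp_unit Au jdA).2 (mult_jordan_decomp_unit Au jdA').2.
by rewrite eS.
Qed.

End MultJordanClosed.

Lemma commuting_additive_jordan (C : closedFieldType) (n : nat) (I : finType)
    (A : I -> 'M[C]_n.+1) :
  (forall i j, GRing.comm (A i) (A j)) ->
  exists D : I -> 'M[C]_n.+1, forall c : I -> C,
    [/\ diagonalizable (\sum_i c i *: D i),
        nilpotent_elt (\sum_i c i *: (A i - D i))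
      & GRing.comm (\sum_i c i *: D i) (\sum_i c i *: (A i - D i))].
Proof.
move=> cA; have /fin_all_exists[f jdA] : forall i, exists f : {poly C},
    diagonalizable (horner_mx (A i) f) /\ nilpotent_elt (A i - horner_mx (A i) f).
  by move=> i; apply: additive_jordan_horner.
pose D i := horner_mx (A i) (f i); exists D => c.
have cAD i j : GRing.comm (A i) (D j) by apply: comm_mx_horner; apply: cA.
have cDD i j : GRing.comm (D i) (D j) by apply: comm_horner_mx; apply: cAD.
have cDN i j : GRing.comm (D i) (A j - D j) by apply: commrB => //; apply: commr_sym.
have cNN i j : GRing.comm (A i - D i) (A j - D j).
  by apply: commrB; apply: commr_sym => //; apply: commrB.
split.
- by apply: diagonalizable_lincomb => // i; apply: (jdA i).1.
- apply: nilpotent_elt_sum => [i j|i]; first by apply: commrZ; apply: commr_sym; apply: commrZ.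
  by apply: nilpotent_eltZ; apply: (jdA i).2.
- exact: commr_lincomb.
Qed.

Section PolynomialMatrices.
Variable C : closedFieldType.
Implicit Types p q : {poly C}.

Lemma poly_eq0_off_roots p q : q != 0 -> (forall u, q.[u] != 0 -> p.[u] = 0) -> p = 0.
Proof.
move=> q0 p0; apply/eqP; apply: contraT => p_neq0.
have /closed_nonrootP[u] : p * q != 0 by rewrite mulf_neq0.
rewrite /root hornerM; have [->|/p0 ->] := eqVneq q.[u] 0; by rewrite ?mulr0 ?mul0r eqxx.
Qed.

Lemma eval_pmx_inj_off_roots m l (A B : 'M[{poly C}]_(m, l)) q : q != 0 ->
  (forall u, q.[u] != 0 -> eval_pmx A u = eval_pmx B u) -> A = B.
Proof.
move=> q0 eAB; apply/matrixP => i j; apply/eqP; rewrite -subr_eq0; apply/eqP.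
apply: (poly_eq0_off_roots q0) => u qu; rewrite hornerD hornerN.
by have /matrixP/(_ i j) := eAB u qu; rewrite !mxE => ->; rewrite subrr.
Qed.

Lemma eval_pmxM m k l (A : 'M[{poly C}]_(m, k)) (B : 'M_(k, l)) u :
  eval_pmx (A *m B) u = eval_pmx A u *m eval_pmx B u.
Proof. exact: (map_mxM (horner_eval u)). Qed.

Lemma eval_pmx_polyC m l (B : 'M[C]_(m, l)) u : eval_pmx (map_mx polyC B) u = B.
Proof. by apply/matrixP => i j; rewrite !mxE hornerC. Qed.

Lemma det_eval_pmx n (A : 'M[{poly C}]_n) u : (\det A).[u] = \det (eval_pmx A u).
Proof.
by have -> : eval_pmx A u = map_mx (horner_eval u) A by []; rewrite det_map_mx.
Qed.

Definition pmx_coef {m l} k (A : 'M[{poly C}]_(m, l)) : 'M[C]_(m, l) :=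
  map_mx (fun p => p`_k) A.

Definition pmx_size m l (A : 'M[{poly C}]_(m, l)) : nat :=
  \max_(ij : 'I_m * 'I_l) size (A ij.1 ij.2).

Definition pmx_of_coefs m l d (B : 'I_d -> 'M[C]_(m, l)) : 'M[{poly C}]_(m, l) :=
  \matrix_(i, j) \sum_(k < d) B k i j *: 'X^k.

Lemma pmx_coefMC k m l r (A : 'M[{poly C}]_(m, l)) (B : 'M[C]_(l, r)) :
  pmx_coef k (A *m map_mx polyC B) = pmx_coef k A *m B.
Proof.
by apply/matrixP => i j; rewrite !mxE coef_sum; apply: eq_bigr => x _; rewrite !mxE coefMC.
Qed.

Lemma pmx_coefCM k m l r (A : 'M[{poly C}]_(l, r)) (B : 'M[C]_(m, l)) :
  pmx_coef k (map_mx polyC B *m A) = B *m pmx_coef k A.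
Proof.
by apply/matrixP => i j; rewrite !mxE coef_sum; apply: eq_bigr => x _; rewrite !mxE coefCM.
Qed.

Lemma eval_pmxE m l (A : 'M[{poly C}]_(m, l)) u :
  eval_pmx A u = \sum_(k < pmx_size A) u ^+ k *: pmx_coef k A.
Proof.
apply/matrixP => i j; rewrite summxE !mxE.
have sizeA : (size (A i j) <= pmx_size A)%N.
  exact: (@leq_bigmax _ (fun ij : 'I_m * 'I_l => size (A ij.1 ij.2)) (i, j)).
by rewrite (horner_coef_wide u sizeA); apply: eq_bigr => k _; rewrite !mxE mulrC.
Qed.

Lemma eval_pmx_of_coefs m l d (B : 'I_d -> 'M[C]_(m, l)) u :
  eval_pmx (pmx_of_coefs B) u = \sum_(k < d) u ^+ k *: B k.
Proof.
apply/matrixP => i j; rewrite !mxE horner_sum summxE; apply: eq_bigr => k _.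
by rewrite hornerZ hornerXn !mxE mulrC.
Qed.

Lemma pmx_coef_comm n q (A : 'M[{poly C}]_n.+1) (X : 'M[C]_n.+1) k : q != 0 ->
  (forall u, q.[u] != 0 -> GRing.comm (eval_pmx A u) X) -> GRing.comm (pmx_coef k A) X.
Proof.
move=> q0 cAX; have : A *m map_mx polyC X = map_mx polyC X *m A.
  apply: (eval_pmx_inj_off_roots q0) => u qu.
  by rewrite !eval_pmxM eval_pmx_polyC; apply: cAX.
by move/(congr1 (pmx_coef k)); rewrite pmx_coefMC pmx_coefCM.
Qed.

(* The factor q of the denominator is needed: U is only known where q(u) != 0. *)
Lemma rational_mx_fun_invmx_mul (n : nat) (q : {poly C})
    (Dp Np : 'M[{poly C}]_n.+1) (U : C -> 'M[C]_n.+1) : q != 0 ->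
  (forall u, q.[u] != 0 -> eval_pmx Dp u \in unitmx) ->
  (forall u, q.[u] != 0 -> U u = invmx (eval_pmx Dp u) *m eval_pmx Np u) ->
  rational_mx_fun (q * \det Dp) U /\ (forall u, q.[u] != 0 -> (q * \det Dp).[u] != 0).
Proof.
move=> q0 Du eU.
have detD u : q.[u] != 0 -> (\det Dp).[u] != 0.
  by move=> qu; rewrite det_eval_pmx -unitfE -unitmxE Du.
have qdetD u : q.[u] != 0 -> (q * \det Dp).[u] != 0.
  by move=> qu; rewrite hornerM mulf_neq0 ?detD.
split=> //; split.
  have /closed_nonrootP[u qu] := q0.
  rewrite mulf_neq0 //; apply: contraNneq (detD u qu) => ->.
  by rewrite horner0.
exists (q *: (\adj Dp *m Np)) => u qdetDu.
have qu : q.[u] != 0 by move: qdetDu; rewrite hornerM mulf_eq0 negb_or => /andP[].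
have evalE m l (A : 'M[{poly C}]_(m, l)) : eval_pmx A u = map_mx (horner_eval u) A by [].
rewrite eU // [eval_pmx (_ *: _) u]evalE map_mxZ map_mxM map_mx_adj -!evalE /= horner_evalE.
rewrite scalerA hornerM invfM mulrAC mulVf // mul1r.
by rewrite /invmx Du // -det_eval_pmx scalemxAl.
Qed.

End PolynomialMatrices.

Section RationalJordanParts.
Variables (C : closedFieldType) (n : nat) (q : {poly C}) (P : 'M[{poly C}]_n.+1).
Variables (M MS MU : C -> 'M[C]_n.+1).
Hypotheses (q_neq0 : q != 0) (MP : forall u, q.[u] != 0 -> M u = q.[u]^-1 *: eval_pmx P u).
Hypothesis Munit : forall u, q.[u] != 0 -> M u \in unitmx.
Hypothesis Mcomm : forall u v, q.[u] != 0 -> q.[v] != 0 -> M u *m M v = M v *m M u.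
Hypothesis Mjd : forall u, q.[u] != 0 -> mult_jordan_decomp (M u) (MS u) (MU u).

Lemma eval_pmx_numerE u : q.[u] != 0 -> eval_pmx P u = q.[u] *: M u.
Proof. by move=> qu; rewrite MP // scalerA mulfV // scale1r. Qed.

Lemma pmx_coef_comm_fun k v : q.[v] != 0 -> GRing.comm (pmx_coef k P) (M v).
Proof.
move=> qv; apply: (pmx_coef_comm _ q_neq0) => u qu.
by rewrite eval_pmx_numerE //; apply/commr_sym/commrZ; apply: Mcomm.
Qed.

Lemma pmx_coef_comm_coef k l : GRing.comm (pmx_coef k P) (pmx_coef l P).
Proof.
apply: (pmx_coef_comm _ q_neq0) => u qu.
by rewrite eval_pmx_numerE //; apply/commr_sym/commrZ; apply: pmx_coef_comm_fun.
Qed.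

Lemma semisimple_part_pmx :
  exists Dp, forall u, q.[u] != 0 -> MS u = q.[u]^-1 *: eval_pmx Dp u.
Proof.
have [Ds jdP] := commuting_additive_jordan
  (fun k : 'I_(pmx_size P) => pmx_coef_comm_coef k).
exists (pmx_of_coefs Ds) => u qu; have [dD nN cDN] := jdP (fun k => u ^+ k).
rewrite -eval_pmx_of_coefs in dD cDN.
set N := \sum_k _ in nN cDN.
have eM : M u = q.[u]^-1 *: eval_pmx (pmx_of_coefs Ds) u + q.[u]^-1 *: N.
  rewrite MP // -scalerDr eval_pmxE eval_pmx_of_coefs -big_split /=.
  by congr (_ *: _); apply: eq_bigr => k _; rewrite -scalerDr addrC subrK.
have cDN' : GRing.comm (q.[u]^-1 *: eval_pmx (pmx_of_coefs Ds) u) (q.[u]^-1 *: N).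
  by apply: commrZ; apply: commr_sym; apply: commrZ; apply: commr_sym.
have jdM := mult_jordan_decomp_of_add eM cDN' (diagonalizableZ _ dD)
  (nilpotent_eltZ _ nN) (Munit qu).
exact: (mult_jordan_decomp_uniq (Munit qu) (Mjd qu) jdM).1.
Qed.

Theorem mult_jordan_parts_rational :
  (exists qS : {poly C}, rational_mx_fun qS MS /\ forall u, q.[u] != 0 -> qS.[u] != 0) /\
  (exists qU : {poly C}, rational_mx_fun qU MU /\ forall u, q.[u] != 0 -> qU.[u] != 0).
Proof.
have [Dp MSD] := semisimple_part_pmx.
split; first by exists q; split=> //; split=> //; exists Dp.
have Du u : q.[u] != 0 -> eval_pmx Dp u \in unitmx.
  move=> qu; have [Su _] := mult_jordan_decomp_unit (Munit qu) (Mjd qu).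
  by move: Su; rewrite MSD // unitmxZ // unitfE invr_eq0.
have MUD u : q.[u] != 0 -> MU u = invmx (eval_pmx Dp u) *m eval_pmx P u.
  move=> qu; have [Su ->] := mult_jordan_decomp_unit (Munit qu) (Mjd qu).
  rewrite MSD // in Su *; rewrite invmxZ // invrK MP // -scalemxAl -scalemxAr.
  by rewrite scalerA mulfV // scale1r.
by have [] := rational_mx_fun_invmx_mul q_neq0 Du MUD; exists (q * \det Dp).
Qed.

End RationalJordanParts.

Theorem lemma4p12 (R : realType) (n : nat) (q : {poly R[i]})
    (M : R[i] -> 'M[R[i]]_n)
    (HM : rational_mx_fun q M)
    (Hinv : forall u, q.[u] != 0 -> M u \in unitmx)
    (Hcomm : forall u v, q.[u] != 0 -> q.[v] != 0 ->
               M u *m M v = M v *m M u)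
    (MS MU : R[i] -> 'M[R[i]]_n)
    (Hjd : forall u, q.[u] != 0 -> mult_jordan_decomp (M u) (MS u) (MU u)) :
  (exists qS : {poly R[i]}, rational_mx_fun qS MS /\
      forall u, q.[u] != 0 -> qS.[u] != 0) /\
  (exists qU : {poly R[i]}, rational_mx_fun qU MU /\
      forall u, q.[u] != 0 -> qU.[u] != 0).
Proof.
have [q0 [P MP]] := HM.
case: n => [|n] in M HM Hinv Hcomm MS MU Hjd P MP *.
  have rat0 (N : R[i] -> 'M_0) : rational_mx_fun q N.
    by split=> //; exists 0 => u _; apply/matrixP => -[].
  by split; exists q.
exact: mult_jordan_parts_rational q0 MP Hinv Hcomm Hjd.
Qed.
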